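(* A point $(s,p)\in\mathbb{C}^2$ belongs to $\mathbb{G}=\{(z_1+z_2,z_1z_2):z_1,z_2\in\mathbb{D}\}$ if and only if both $1>|p|^2+\mathrm{Im}(\overline{s}p+\overline{s})$ and $2+2|p|^2>|s|^2+|s^2-4p|$.
   Context: $\mathbb{D}$ is the open unit disc in $\mathbb{C}$. *)

From HB Require Import structures.
From mathcomp Require Import all_boot all_order all_algebra.
From mathcomp Require Import complex.
From mathcomp Require Import reals.
Set Implicit Arguments. Unset Strict Implicit. Unset Printing Implicit Defensive.
Import Order.TTheory GRing.Theory Num.Theory.
Local Open Scope ring_scope.

Definition in_disc (R : realType) (z : R[i]) : Prop := Normc.normc z < 1.

Definition in_symm_bidisc (R : realType) (s p : R[i]) : Prop :=
  exists z1 z2 : R[i], in_disc z1 /\ in_disc z2 /\ s = z1 + z2 /\ p = z1 * z2.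

From HB Require Import structures.
From mathcomp Require Import all_boot all_order all_algebra.
From mathcomp Require Import complex.
From mathcomp Require Import reals.
From mathcomp Require Import ring lra.
Set Implicit Arguments. Unset Strict Implicit. Unset Printing Implicit Defensive.
Import Order.TTheory GRing.Theory Num.Theory.
Local Open Scope ring_scope.

(* Write s = z1 + z2, p = z1 z2, A = |z1|^2, B = |z2|^2, b = Im z1, d = Im z2.
   By the parallelogram law the second inequality reads (1 - A)(1 - B) > 0,
   and the first reads (1 - A)((1 + B)/2 + d) + (1 - B)((1 + A)/2 + b) > 0.
   Since (1 + A)/2 + b >= (1 + b)^2/2 >= 0, the first excludes A, B > 1,
   while for A, B < 1 both coefficients are positive.  Every (s, p) arises
   from some z1, z2 (the roots of X^2 - sX + p), so this characterises G. *)

Section RealInequalities.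
Variable R : realFieldType.

Lemma half_addr_ge0 (A b : R) : b ^+ 2 <= A -> 0 <= (1 + A) / 2 + b.
Proof. by move=> bA; have := sqr_ge0 (1 + b); rewrite !expr2 in bA *; lra. Qed.

Lemma half_addr_gt0 (A b : R) : b ^+ 2 <= A -> A < 1 -> 0 < (1 + A) / 2 + b.
Proof.
move=> bA A1; have b1 : 0 < 1 + b by rewrite expr2 in bA; nra.
by have := sqr_ge0 b; rewrite !expr2 in bA *; nra.
Qed.

Lemma lt1_sqr_norms_iff (A B b d : R) : b ^+ 2 <= A -> d ^+ 2 <= B ->
  (A < 1 /\ B < 1) <->
  (A * B + (A * d + B * b - (b + d)) < 1 /\ 2 * A + 2 * B < 2 + 2 * (A * B)).
Proof.
move=> bA dB; set u := (1 + A) / 2 + b; set v := (1 + B) / 2 + d.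
have decomp : 1 - (A * B + (A * d + B * b - (b + d))) = (1 - A) * v + (1 - B) * u.
  by rewrite /u /v; field.
have prod : 2 + 2 * (A * B) - (2 * A + 2 * B) = 2 * ((1 - A) * (1 - B)) by ring.
split=> [[A1 B1] | [h1 h2]].
  have u0 := half_addr_gt0 bA A1; have v0 := half_addr_gt0 dB B1.
  by split; [rewrite -subr_gt0 decomp | rewrite -subr_gt0 prod]; nra.
rewrite -subr_gt0 decomp in h1; rewrite -subr_gt0 prod in h2.
have u0 := half_addr_ge0 bA; have v0 := half_addr_ge0 dB.
have [A1 | A1] := ltrP A 1; have [B1 | B1] := ltrP B 1; nra.
Qed.

End RealInequalities.

Section ComplexNorm.
Variable R : rcfType.
Implicit Types z w : R[i].

Lemma normc_sqr z : Normc.normc z ^+ 2 = complex.Re z ^+ 2 + complex.Im z ^+ 2.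
Proof. by case: z => a b /=; rewrite sqr_sqrtr // addr_ge0 // sqr_ge0. Qed.

Lemma sqr_Im_le_normc z : complex.Im z ^+ 2 <= Normc.normc z ^+ 2.
Proof. by rewrite normc_sqr lerDr sqr_ge0. Qed.

Lemma normc_lt1_sqr z : (Normc.normc z < 1) = (Normc.normc z ^+ 2 < 1).
Proof. by rewrite expr_lt1 //; case: z => a b; exact: sqrtr_ge0. Qed.

Lemma normc_parallelogram z w :
  Normc.normc (z + w) ^+ 2 + Normc.normc (z - w) ^+ 2 =
  2 * Normc.normc z ^+ 2 + 2 * Normc.normc w ^+ 2.
Proof. by rewrite !normc_sqr; case: z => a b; case: w => c d /=; ring. Qed.

Lemma Im_conj_sum_prod z w :
  complex.Im ((z + w)^* * (z * w) + (z + w)^*)%C =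
  Normc.normc z ^+ 2 * complex.Im w + Normc.normc w ^+ 2 * complex.Im z
  - (complex.Im z + complex.Im w).
Proof. by rewrite !normc_sqr; case: z => a b; case: w => c d /=; ring. Qed.

Lemma disc_pair_iff_sum_prod z w :
  (Normc.normc z < 1 /\ Normc.normc w < 1) <->
  (Normc.normc (z * w) ^+ 2 + complex.Im ((z + w)^* * (z * w) + (z + w)^*)%C < 1 /\
   Normc.normc (z + w) ^+ 2 + Normc.normc ((z + w) ^+ 2 - 4%:R * (z * w)) <
     2%:R + 2%:R * Normc.normc (z * w) ^+ 2).
Proof.
have -> : (z + w) ^+ 2 - 4%:R * (z * w) = (z - w) ^+ 2 by ring.
rewrite Normc.normcM exprMn expr2 Normc.normcM -!expr2 normc_parallelogram.
rewrite Im_conj_sum_prod !normc_lt1_sqr.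
exact: lt1_sqr_norms_iff (sqr_Im_le_normc z) (sqr_Im_le_normc w).
Qed.

Lemma exists_sum_prod_eq s p : exists z w : R[i], s = z + w /\ p = z * w.
Proof.
set r := sqrtc (s ^+ 2 - 4%:R * p).
have r2 : r ^+ 2 = s ^+ 2 - 4%:R * p by exact: sqr_sqrtc.
have n2 : (2%:R : R[i]) != 0 by rewrite pnatr_eq0.
exists ((s + r) / 2%:R), ((s - r) / 2%:R); split; first by field.
have -> : (s + r) / 2%:R * ((s - r) / 2%:R) = (s ^+ 2 - r ^+ 2) / (2%:R * 2%:R).
  by field.
by rewrite r2; field.
Qed.

End ComplexNorm.

Theorem corollary3p4 (R : realType) (s p : R[i]) :
  in_symm_bidisc s p <->
  (Normc.normc p ^+ 2 + complex.Im (conjc s * p + conjc s) < 1 /\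
   Normc.normc s ^+ 2 + Normc.normc (s ^+ 2 - 4%:R * p) < 2%:R + 2%:R * Normc.normc p ^+ 2).
Proof.
split=> [[z [w [z1 [w1 [-> ->]]]]] | ineqs].
  by apply/(disc_pair_iff_sum_prod z w).
have [z [w [es ep]]] := exists_sum_prod_eq s p.
move: ineqs; rewrite es ep => /(disc_pair_iff_sum_prod z w) [z1 w1].
by exists z, w.
Qed.
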